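(* Let $p,p'$ be POPs of size $k$ and $q,q'$ be POPs of size $l$. If $p\sim p'$ and $q\sim q'$, then $p+q\sim p'+q'$.
   Context: A partially ordered pattern (POP) $p$ of size $k$ is a partial order $\le_p$ on $[k]=\{1,\dots,k\}$. A permutation $\pi=\pi_1\cdots\pi_n$ contains $p$ if there are indices $i_1<\dots<i_k$ with $\pi_{i_j}<\pi_{i_m}$ whenever $j<_p m$; otherwise it avoids $p$. $\mathfrak S_n(p)$ is the set of permutations of $[n]$ avoiding $p$, and $p\sim q$ (Wilf-equivalence) means $|\mathfrak S_n(p)|=|\mathfrak S_n(q)|$ for all $n\ge 1$. For a POP $p$ of size $k$ and a POP $q$ of size $l$, the disjoint sum $p+q$ is the POP of size $k+l$ on $[k+l]$ in which $i\le j$ for $i,j\in[k]$ iff $i\le_p j$, $k+i\le k+j$ for $i,j\in[l]$ iff $i\le_q j$, and no element of $[k]$ is comparable with an element of $[k+1,k+l]$. *)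

From mathcomp Require Import all_boot all_fingroup.
Set Implicit Arguments. Unset Strict Implicit. Unset Printing Implicit Defensive.

(* A partially ordered pattern (POP) of size k: a relation on [k] = 'I_k
   (elements 0..k-1 stand for 1..k) that is a (non-strict) partial order. *)
Definition is_pop (k : nat) (p : rel 'I_k) : Prop :=
  reflexive p /\ antisymmetric p /\ transitive p.

Record pop (k : nat) := Pop { pop_rel :> rel 'I_k; pop_axiom : is_pop pop_rel }.

Definition pop_lt (k : nat) (p : pop k) (j m : 'I_k) : bool := (j != m) && p j m.

(* pi contains p: there are indices i_1 < ... < i_k (a strictly increasing map
   f : 'I_k -> 'I_n, j |-> i_(j+1)) with pi(i_j) < pi(i_m) whenever j <_p m. *)
Definition contains (k n : nat) (p : pop k) (pi : 'S_n) : bool :=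
  [exists f : {ffun 'I_k -> 'I_n},
    [forall j : 'I_k, forall m : 'I_k,
       ((j < m) ==> (f j < f m)) && (pop_lt p j m ==> (pi (f j) < pi (f m)))]].

Definition avoids (k n : nat) (p : pop k) (pi : 'S_n) : bool := ~~ contains p pi.

Definition num_avoiders (k : nat) (p : pop k) (n : nat) : nat :=
  #|[set pi : 'S_n | avoids p pi]|.

Definition wilf_equiv (k l : nat) (p : pop k) (q : pop l) : Prop :=
  forall n : nat, 1 <= n -> num_avoiders p n = num_avoiders q n.

Definition sum_rel (k l : nat) (p : pop k) (q : pop l) : rel 'I_(k + l) :=
  fun x y =>
    match split x, split y with
    | inl i, inl j => p i j
    | inr i, inr j => q i j
    | _, _ => false
    end.

Lemma sum_rel_is_pop (k l : nat) (p : pop k) (q : pop l) : is_pop (sum_rel p q).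
Proof.
case: p => p [pr [pa pt]]; case: q => q [qr [qa qt]]; rewrite /sum_rel /=.
split; [|split].
- by move=> x; case: (split x).
- move=> x y; case Ex: (split x) => [i|i]; case Ey: (split y) => [j|j] //=.
  + by move/pa => eij; rewrite -(splitK x) -(splitK y) Ex Ey eij.
  + by move/qa => eij; rewrite -(splitK x) -(splitK y) Ex Ey eij.
- move=> y x z; case: (split x) => [i|i]; case: (split y) => [j|j] //=;
  case: (split z) => [m|m] //=; [exact: pt | exact: qt].
Qed.

Definition pop_sum (k l : nat) (p : pop k) (q : pop l) : pop (k + l) :=
  Pop (sum_rel_is_pop p q).

From mathcomp Require Import all_boot all_fingroup zify.
Set Implicit Arguments. Unset Strict Implicit. Unset Printing Implicit Defensive.

(* A permutation avoids p + q iff it avoids p, or the shortest prefix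
   containing p has some length t and the suffix after it avoids q.  For fixed
   t the number of permutations of [n] of the second kind factors as
   (number of value sets of the prefix) * (number of t-patterns whose shortest
   p-containing prefix is the whole pattern) * |S_(n-t)(q)|, and the middle
   factor is t |S_(t-1)(p)| - |S_t(p)|.  So |S_n(p + q)| depends only on the
   sequences |S_m(p)| and |S_m(q)|.  Permutations are handled as words of
   distinct naturals, so that prefixes and suffixes can be standardised. *)

Section SeqContains.
Variables (k : nat) (p : rel 'I_k).

Definition seq_contains (s : seq nat) : bool :=
  [exists f : {ffun 'I_k -> 'I_(size s)}, [forall j : 'I_k, forall m : 'I_k,
     ((j < m) ==> (f j < f m)) &&
     ((j != m) && p j m ==> (nth 0 s (f j) < nth 0 s (f m)))]].

Definition seq_avoids (s : seq nat) : bool := ~~ seq_contains s.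

Lemma seq_containsP s :
  reflect (exists f : 'I_k -> nat, [/\ forall j, f j < size s,
             forall j m : 'I_k, j < m -> f j < f m &
             forall j m, (j != m) && p j m -> nth 0 s (f j) < nth 0 s (f m)])
          (seq_contains s).
Proof.
apply: (iffP existsP) => [[f /forallP fP]|[f [fs fmono fp]]].
- exists (fun j => val (f j)); split => [j|j m jm|j m jm]; first exact: ltn_ord.
  + by have /forallP/(_ m)/andP[/implyP/(_ jm)] := fP j.
  + by have /forallP/(_ m)/andP[_ /implyP/(_ jm)] := fP j.
- exists [ffun j => Ordinal (fs j)]; apply/forallP => j; apply/forallP => m.
  by rewrite !ffunE; apply/andP; split; apply/implyP; [apply: fmono | apply: fp].
Qed.

Lemma seq_contains_take t s : seq_contains (take t s) -> seq_contains s.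
Proof.
move=> /seq_containsP[f [fs fmono fp]]; apply/seq_containsP; exists f.
have ft j : f j < t by have := fs j; rewrite size_take_min leq_min => /andP[].
have fs' j : f j < size s by have := fs j; rewrite size_take_min leq_min => /andP[].
by split=> // j m /fp; rewrite !nth_take.
Qed.

Lemma seq_contains_drop t s : seq_contains (drop t s) -> seq_contains s.
Proof.
move=> /seq_containsP[f [fs fmono fp]]; apply/seq_containsP.
exists (fun j => t + f j); split => [j | j m /fmono | j m /fp].
- by have := fs j; rewrite size_drop; lia.
- by rewrite ltn_add2l.
- by rewrite !nth_drop.
Qed.

Lemma seq_contains_map (r : nat -> nat) s : {in s &, {mono r : x y / x < y}} ->
  seq_contains (map r s) = seq_contains s.
Proof.
move=> rmono; apply/seq_containsP/seq_containsP => -[f [fs fmono fp]]; exists f;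
  rewrite size_map in fs *; split => // j m /fp; by rewrite !(nth_map 0) // rmono ?mem_nth.
Qed.
End SeqContains.

Lemma seq_contains_nil k (p : rel 'I_k) : seq_contains p [::] = (k == 0).
Proof.
case: k p => [|k] p; apply/seq_containsP.
- by exists (fun _ => 0); split => -[].
- by case=> f [/(_ ord0)].
Qed.

Section DisjointSum.
Variables (k l : nat) (p : pop k) (q : pop l).

Lemma sum_rel_lshift i j : sum_rel p q (lshift l i) (lshift l j) = p i j.
Proof. by rewrite /sum_rel (unsplitK (inl _ i)) (unsplitK (inl _ j)). Qed.

Lemma sum_rel_rshift i j : sum_rel p q (rshift k i) (rshift k j) = q i j.
Proof. by rewrite /sum_rel (unsplitK (inr _ i)) (unsplitK (inr _ j)). Qed.

Lemma seq_contains_sum_cat u v :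
  seq_contains p u -> seq_contains q v -> seq_contains (sum_rel p q) (u ++ v).
Proof.
move=> /seq_containsP[f [fu fmono fp]] /seq_containsP[g [gv gmono gq]].
apply/seq_containsP.
exists (fun x => match split x with inl i => f i | inr j => size u + g j end); split.
- by move=> x; rewrite size_cat; case: split_ordP => i _; [have := fu i | have := gv i]; lia.
- move=> x y; case: split_ordP => i ->; case: split_ordP => j -> /=.
  + exact: fmono.
  + by have := fu i; lia.
  + by have := ltn_ord j; lia.
  + by rewrite ltn_add2l => /gmono; rewrite ltn_add2l.
- move=> x y; case: split_ordP => i ->; case: split_ordP => j ->;
    rewrite ?sum_rel_lshift ?sum_rel_rshift ?(inj_eq (@lshift_inj _ _)) ?(inj_eq (@rshift_inj _ _)).
  + by move/fp; rewrite !nth_cat !fu.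
  + by rewrite /sum_rel (unsplitK (inl _ i)) (unsplitK (inr _ j)) andbF.
  + by rewrite /sum_rel (unsplitK (inr _ i)) (unsplitK (inl _ j)) andbF.
  + by move/gq; rewrite !nth_cat !ltnNge !leq_addr /= !addKn.
Qed.

Lemma seq_contains_sum_split s : seq_contains (sum_rel p q) s ->
  exists t, seq_contains p (take t s) && seq_contains q (drop t s).
Proof.
move=> /seq_containsP[F [Fs Fmono Frel]].
(* Cut just after the last position used by the p-part. *)
pose t := \max_(i : 'I_k) (F (lshift l i)).+1.
have lt_left (i : 'I_k) : F (lshift l i) < t by exact: leq_bigmax.
have ge_right (j : 'I_l) : t <= F (rshift k j).
  by apply/bigmax_leqP => i _; apply: Fmono => /=; have := ltn_ord i; lia.
have le_ts : t <= size s by apply/bigmax_leqP => i _; apply: Fs.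
exists t; apply/andP; split; apply/seq_containsP.
- exists (fun i => F (lshift l i)); split => [i | i j | i j].
  + by rewrite size_takel.
  + by move=> ij; apply: Fmono.
  + rewrite !nth_take // => ijp; apply: Frel.
    by rewrite (inj_eq (@lshift_inj _ _)) sum_rel_lshift.
- exists (fun j => F (rshift k j) - t); split => [j | i j ij | i j ijq].
  + by rewrite size_drop; have := Fs (rshift k j); have := ge_right j; lia.
  + have : F (rshift k i) < F (rshift k j) by apply: Fmono; rewrite /= ltn_add2l.
    by have := ge_right i; have := ge_right j; lia.
  + rewrite !nth_drop !subnKC //; apply: Frel.
    by rewrite (inj_eq (@rshift_inj _ _)) sum_rel_rshift.
Qed.
End DisjointSum.

Section ShortestPrefix.
Variables (k : nat) (p : rel 'I_k).

Definition shortest_prefix (t : nat) (s : seq nat) : bool :=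
  seq_contains p (take t s) && [forall i : 'I_t, ~~ seq_contains p (take i s)].

Lemma shortest_prefix_take t s : shortest_prefix t (take t s) = shortest_prefix t s.
Proof.
rewrite /shortest_prefix take_taker //; congr (_ && _); apply: eq_forallb => i.
by rewrite take_takel // ltnW.
Qed.

Lemma shortest_prefix0 s : shortest_prefix 0 s = seq_contains p [::].
Proof.
by rewrite /shortest_prefix take0 (_ : [forall i : 'I_0, _] = true) ?andbT //; apply/forallP => -[].
Qed.

Lemma shortest_prefixS t s :
  shortest_prefix t.+1 s = seq_contains p (take t.+1 s) && seq_avoids p (take t s).
Proof.
rewrite /shortest_prefix; congr (_ && _); apply/forallP/idP => [/(_ ord_max) // | avt i].
have le_it : i <= t by rewrite -ltnS.
by apply: contra avt; rewrite -(take_takel s le_it); apply: seq_contains_take.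
Qed.

Lemma shortest_prefix_contains t s : shortest_prefix t s -> seq_contains p s.
Proof. by case/andP => /seq_contains_take. Qed.

Lemma shortest_prefix_exists s : seq_contains p s -> exists2 t, t <= size s & shortest_prefix t s.
Proof.
move=> cs; have ex : exists t, seq_contains p (take t s) by exists (size s); rewrite take_size.
case: (ex_minnP ex) => t ct tmin; exists t; first by apply: tmin; rewrite take_size.
rewrite /shortest_prefix ct; apply/forallP => i; apply/negP => /tmin.
by rewrite leqNgt ltn_ord.
Qed.

Lemma shortest_prefix_inj t1 t2 s : shortest_prefix t1 s -> shortest_prefix t2 s -> t1 = t2.
Proof.
move=> /andP[c1 /forallP m1] /andP[c2 /forallP m2].
apply/eqP; rewrite eqn_leq; apply/andP; split; rewrite leqNgt; apply/negP => lt.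
- by have := m1 (Ordinal lt); rewrite c2.
- by have := m2 (Ordinal lt); rewrite c1.
Qed.
End ShortestPrefix.

Section ShortestPrefixSum.
Variables (k l : nat) (p : pop k) (q : pop l).

Lemma seq_contains_sum_shortest t s : shortest_prefix p t s ->
  seq_contains (sum_rel p q) s = seq_contains q (drop t s).
Proof.
move=> sh; apply/idP/idP => [/seq_contains_sum_split[t' /andP[cp' cq']] | cq].
- have le_tt' : t <= t'.
    rewrite leqNgt; apply/negP => lt; case/andP: sh => _ /forallP/(_ (Ordinal lt)).
    by rewrite cp'.
  by apply: (@seq_contains_drop _ _ (t' - t)); rewrite drop_drop subnK.
- by rewrite -(cat_take_drop t s); apply: seq_contains_sum_cat => //; case/andP: sh.
Qed.

Lemma seq_avoids_sum_left s : seq_avoids p s -> seq_avoids (sum_rel p q) s.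
Proof.
by apply: contra => /seq_contains_sum_split[t /andP[/seq_contains_take]].
Qed.

Lemma seq_avoids_sumE s :
  (seq_avoids (sum_rel p q) s : nat) = seq_avoids p s
    + \sum_(t < (size s).+1) (shortest_prefix p t s && seq_avoids q (drop t s)).
Proof.
have [cps | nps] := boolP (seq_contains p s); last first.
  rewrite seq_avoids_sum_left // /seq_avoids nps big1 // => t _.
  by rewrite (contraNF (@shortest_prefix_contains _ p t s) nps).
have [t0 t0s sh0] := shortest_prefix_exists cps.
rewrite /seq_avoids cps (bigD1 (@Ordinal (size s).+1 t0 t0s)) //= sh0 big1 ?addn0.
  by rewrite (seq_contains_sum_shortest sh0).
move=> t ne; case sh: (shortest_prefix p t s) => //=.
by case/eqP: ne; apply: val_inj; exact: shortest_prefix_inj sh sh0.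
Qed.
End ShortestPrefixSum.

Definition perm_word n (pi : 'S_n) : seq nat := [seq val (pi j) | j <- enum 'I_n].

Lemma size_perm_word n (pi : 'S_n) : size (perm_word pi) = n.
Proof. by rewrite size_map size_enum_ord. Qed.

Lemma nth_perm_word n (pi : 'S_n) (j : 'I_n) : nth 0 (perm_word pi) j = pi j.
Proof. by rewrite (nth_map j) ?size_enum_ord // nth_ord_enum. Qed.

Lemma contains_perm_word k (p : pop k) n (pi : 'S_n) :
  contains p pi = seq_contains p (perm_word pi).
Proof.
apply/existsP/seq_containsP => [[f /forallP fP] | [F [Fs Fmono Fp]]].
- exists (fun j => val (f j)); split => [j | j m jm | j m jm].
  + by rewrite size_perm_word ltn_ord.
  + by have /forallP/(_ m)/andP[/implyP/(_ jm)] := fP j.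
  + have /forallP/(_ m)/andP[_ /implyP/(_ jm)] := fP j.
    by rewrite !nth_perm_word.
- have Fn j : F j < n by rewrite -(size_perm_word pi).
  exists [ffun j => Ordinal (Fn j)]; apply/forallP => j; apply/forallP => m.
  rewrite !ffunE; apply/andP; split; apply/implyP; first exact: Fmono.
  by move/Fp; rewrite -(nth_perm_word pi (Ordinal (Fn j))) -(nth_perm_word pi (Ordinal (Fn m))).
Qed.

Lemma perm_word_inj n : injective (@perm_word n).
Proof.
move=> pi1 pi2 E; apply/permP => j; apply: val_inj.
by have := nth_perm_word pi1 j; rewrite E nth_perm_word.
Qed.

Lemma perm_word_iota n (pi : 'S_n) : perm_eq (perm_word pi) (iota 0 n).
Proof.
apply: uniq_perm; rewrite ?iota_uniq //.
  by rewrite map_inj_uniq ?enum_uniq // => i j /val_inj/perm_inj.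
move=> x; rewrite mem_iota add0n; apply/mapP/idP => [[j _ ->] | xn]; first exact: ltn_ord.
by exists ((pi^-1)%g (Ordinal xn)); rewrite ?mem_enum ?permKV.
Qed.

Lemma perm_wordP n (s : seq nat) : perm_eq s (iota 0 n) -> exists pi : 'S_n, perm_word pi = s.
Proof.
move=> sn; have sz : size s = n by rewrite (perm_size sn) size_iota.
have us : uniq s by rewrite (perm_uniq sn) iota_uniq.
have sj (j : 'I_n) : nth 0 s j < n.
  by have := mem_nth 0 (_ : j < size s); rewrite (perm_mem sn) mem_iota sz; apply.
have inj : injective (fun j => Ordinal (sj j)).
  by move=> i j [] /eqP; rewrite nth_uniq ?sz // => /eqP /val_inj.
exists (perm inj); apply: (@eq_from_nth _ 0); rewrite size_perm_word ?sz // => i lt_in.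
by rewrite (nth_perm_word _ (Ordinal lt_in)) permE.
Qed.

Lemma perm_words n : perm_eq (map (@perm_word n) (enum 'S_n)) (permutations (iota 0 n)).
Proof.
apply: uniq_perm; rewrite ?permutations_uniq ?(map_inj_uniq (@perm_word_inj n)) ?enum_uniq //.
move=> s; rewrite mem_permutations; apply/mapP/idP => [[pi _ ->] | /perm_wordP[pi <-]].
- exact: perm_word_iota.
- by exists pi; rewrite ?mem_enum.
Qed.

Lemma num_avoidersE k (p : pop k) n :
  num_avoiders p n = count (seq_avoids p) (permutations (iota 0 n)).
Proof.
rewrite -(seq.permP (perm_words n)) count_map /num_avoiders cardsE cardE.
rewrite /enum_mem size_filter count_filter; apply: eq_count => pi.
by rewrite !inE -topredE /= andbT /seq_avoids contains_perm_word.
Qed.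

Definition order_invariant (P : pred (seq nat)) : Prop :=
  forall (r : nat -> nat) s, {in s &, {mono r : x y / x < y}} -> P (map r s) = P s.

Lemma order_invariant_avoids k (p : rel 'I_k) : order_invariant (seq_avoids p).
Proof. by move=> r s rmono; rewrite /seq_avoids seq_contains_map. Qed.

Lemma order_invariant_shortest_prefix k (p : rel 'I_k) t :
  order_invariant (shortest_prefix p t).
Proof.
move=> r s rmono; have rmono_take i : {in take i s &, {mono r : x y / x < y}}.
  by apply: sub_in2 rmono => x /mem_take.
rewrite /shortest_prefix -map_take seq_contains_map //; congr (_ && _).
by apply: eq_forallb => i; rewrite -map_take seq_contains_map.
Qed.

Lemma map_index_iota (S : seq nat) : uniq S -> map (index^~ S) S = iota 0 (size S).
Proof.
move=> uS; transitivity (map (index^~ S) (mkseq (nth 0 S) (size S))).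
  by rewrite mkseq_nth.
rewrite /mkseq -map_comp; apply: map_id_in => i.
by rewrite mem_iota add0n => lt_iS; rewrite /= index_uniq.
Qed.

Lemma perm_eq_permutations_index (S : seq nat) : uniq S ->
  perm_eq (map (map (index^~ S)) (permutations S)) (permutations (iota 0 (size S))).
Proof.
move=> uS; apply: uniq_perm; rewrite ?permutations_uniq //.
  rewrite map_inj_in_uniq ?permutations_uniq // => s1 s2.
  rewrite !mem_permutations => /perm_mem s1S /perm_mem s2S.
  apply: (@inj_in_map _ _ (index^~ S) (mem S)).
  - by move=> x y xS yS; apply: index_inj.
  - by rewrite inE; apply/allP => x; rewrite /= s1S.
  - by rewrite inE; apply/allP => x; rewrite /= s2S.
move=> t; rewrite mem_permutations -(map_index_iota uS); apply/mapP/idP.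
  by move=> [s]; rewrite mem_permutations => sS ->; apply: perm_map.
move=> tS; exists (map (nth 0 S) t).
  rewrite mem_permutations -{2}(mkseq_nth 0 S) /mkseq; apply: perm_map.
  by rewrite -(map_index_iota uS).
rewrite -map_comp map_id_in // => i.
by rewrite (perm_mem tS) map_index_iota // mem_iota add0n => lt_iS; rewrite /= index_uniq.
Qed.

Lemma index_sorted_mono (S : seq nat) : sorted ltn S -> {in S &, {mono index^~ S : x y / x < y}}.
Proof.
move=> sS x y xS yS; apply/idP/idP; first exact: (sorted_ltn_index ltn_trans sS).
have /andP[_ sleS] : uniq S && sorted leq S by rewrite -ltn_sorted_uniq_leq.
by apply: contraLR; rewrite -!leqNgt; apply: (sorted_leq_index leq_trans leqnn sleS).
Qed.

Lemma count_permutations_iota (P : pred (seq nat)) (Y : seq nat) :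
  order_invariant P -> uniq Y ->
  count P (permutations Y) = count P (permutations (iota 0 (size Y))).
Proof.
move=> invP uY; pose S := sort leq Y.
have SY : perm_eq S Y by rewrite perm_sort.
have uS : uniq S by rewrite (perm_uniq SY).
have sS : sorted ltn S by rewrite ltn_sorted_uniq_leq uS sort_sorted //; exact: leq_total.
rewrite -(seq.permP (perm_permutations SY)) -(perm_size SY).
rewrite -(seq.permP (perm_eq_permutations_index uS)) count_map.
apply: eq_in_count => s; rewrite mem_permutations => /perm_mem sS_mem /=.
by rewrite invP //; apply: sub_in2 (index_sorted_mono sS) => x; rewrite sS_mem.
Qed.

Lemma count_partition (T K : eqType) (key : T -> K) (R : pred T) (L : seq T) (Ks : seq K) :
  uniq Ks -> {in L, forall s, key s \in Ks} ->
  count R L = \sum_(y <- Ks) count R [seq s <- L | key s == y].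
Proof.
move=> uK; under eq_bigr => y _ do rewrite count_filter.
elim: L => [|s L IH] keyL /=; first by rewrite big1.
rewrite big_split /= -IH => [|x xL]; last by apply: keyL; rewrite inE xL orbT.
congr (_ + _); rewrite (bigD1_seq (key s)) ?keyL ?mem_head //= eqxx andbT big1 ?addn0 //.
by move=> y /negbTE; rewrite eq_sym => ->; rewrite andbF.
Qed.

Lemma count_allpairs_cat t (P Q : pred (seq nat)) (U V : seq (seq nat)) :
  {in U, forall u, size u = t} ->
  count (fun s => P (take t s) && Q (drop t s)) [seq u ++ v | u <- U, v <- V]
  = count P U * count Q V.
Proof.
elim: U => [|u U IH] sizeU //=.
rewrite count_cat IH => [|x xU]; last by apply: sizeU; rewrite inE xU orbT.
rewrite mulnDl count_map; congr (_ + _).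
have su : size u = t by apply: sizeU; rewrite mem_head.
under eq_count => v do rewrite /= take_size_cat // drop_size_cat //.
by case: (P u); rewrite ?mul1n ?mul0n ?count_pred0.
Qed.

Section PrefixSplit.
Variables (X : seq nat) (t : nat).
Hypotheses (uX : uniq X) (tX : t <= size X).

Let prefix_set (s : seq nat) := sort leq (take t s).
Let suffix_set (y : seq nat) := [seq x <- X | x \notin y].

Lemma perm_eq_drop_suffix_set s : s \in permutations X ->
  perm_eq (drop t s) (suffix_set (prefix_set s)).
Proof.
rewrite mem_permutations => sX.
have : uniq (take t s ++ drop t s) by rewrite cat_take_drop (perm_uniq sX).
rewrite cat_uniq => /and3P[_ /hasPn disj udrop].
apply: uniq_perm; rewrite ?filter_uniq // => x.
rewrite mem_filter mem_sort -(perm_mem sX) -{3}(cat_take_drop t s) mem_cat.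
by case dx: (x \in drop t s); rewrite ?orbF ?andNb ?(negbTE (disj _ dx)).
Qed.

Lemma perm_eq_fibre s0 : s0 \in permutations X ->
  perm_eq [seq s <- permutations X | prefix_set s == prefix_set s0]
          [seq u ++ v | u <- permutations (prefix_set s0),
                        v <- permutations (suffix_set (prefix_set s0))].
Proof.
move=> s0X; set y := prefix_set s0.
have sy : size y = t.
  by rewrite size_sort size_takel // (perm_size (_ : perm_eq s0 X)) // -mem_permutations.
apply: uniq_perm.
- by rewrite filter_uniq ?permutations_uniq.
- apply: allpairs_uniq; rewrite ?permutations_uniq //.
  move=> [u1 v1] [u2 v2] /allpairsP[[a b] [/= + _ [-> ->]]] /allpairsP[[c d] [/= + _ [-> ->]]].
  rewrite !mem_permutations => /perm_size sa /perm_size sc E.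
  have := congr1 (take t) E; have := congr1 (drop t) E.
  by rewrite !take_size_cat ?drop_size_cat ?sa ?sc // => -> ->.
move=> s; rewrite mem_filter; apply/andP/allpairsP.
- move=> [/eqP key_s sX]; exists (take t s, drop t s); split => /=.
  + by rewrite mem_permutations -key_s perm_sym perm_sort.
  + by rewrite mem_permutations -key_s; apply: perm_eq_drop_suffix_set.
  + by rewrite cat_take_drop.
- move=> [[u v] [/= + + ->]]; rewrite !mem_permutations => uy vz.
  have su : size u = t by rewrite (perm_size uy).
  split.
  + rewrite /prefix_set take_size_cat //; apply/eqP.
    apply/perm_sortP; [exact: leq_total | exact: leq_trans | exact: anti_leq |].
    by rewrite (permPl uy) /y /prefix_set perm_sort.
  + have s0X' : perm_eq s0 X by rewrite -mem_permutations.
    rewrite (permPl (perm_cat uy vz)) -(permPr s0X') -(cat_take_drop t s0).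
    apply: perm_cat; first by rewrite perm_sort.
    by rewrite perm_sym perm_eq_drop_suffix_set.
Qed.

Lemma count_permutations_take_drop (P Q : pred (seq nat)) :
  order_invariant P -> order_invariant Q ->
  count (fun s => P (take t s) && Q (drop t s)) (permutations X)
  = size (undup (map prefix_set (permutations X)))
    * (count P (permutations (iota 0 t)) * count Q (permutations (iota 0 (size X - t)))).
Proof.
move=> invP invQ.
have keys_uniq := undup_uniq (map prefix_set (permutations X)).
rewrite (@count_partition _ _ prefix_set _ _ _ keys_uniq) => [|s sX]; last first.
  by rewrite mem_undup map_f.
rewrite -[in RHS](count_predT (undup _)) mulnC -iter_addn_0 -big_const_seq.
apply: eq_big_seq => y.
rewrite mem_undup => /mapP[s0 s0X ->].
have s0X' : perm_eq s0 X by rewrite -mem_permutations.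
have sy : size (prefix_set s0) = t by rewrite size_sort size_takel // (perm_size s0X').
have sz : size (suffix_set (prefix_set s0)) = size X - t.
  by rewrite -(perm_size (perm_eq_drop_suffix_set s0X)) size_drop (perm_size s0X').
have uy : uniq (prefix_set s0) by rewrite sort_uniq take_uniq // (perm_uniq s0X').
rewrite (seq.permP (perm_eq_fibre s0X)) (count_allpairs_cat _ _ (t := t)) => [|u].
  rewrite (count_permutations_iota invP uy) sy.
  by rewrite (count_permutations_iota invQ (filter_uniq _ uX)) sz.
by rewrite mem_permutations => /perm_size ->.
Qed.
End PrefixSplit.

Lemma count_sum_nat (T : Type) (a : pred T) (L : seq T) : count a L = \sum_(x <- L) (a x : nat).
Proof. by rewrite -sumn_count sumnE big_map. Qed.

Lemma wilf_equiv_count k (p p' : pop k) : wilf_equiv p p' ->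
  forall m, count (seq_avoids p) (permutations (iota 0 m))
          = count (seq_avoids p') (permutations (iota 0 m)).
Proof.
move=> pp' [|m]; first by rewrite /= /seq_avoids !seq_contains_nil.
by rewrite -!num_avoidersE pp'.
Qed.

Lemma count_shortest_prefix_eq k (p p' : pop k) t :
  (forall m, count (seq_avoids p) (permutations (iota 0 m))
           = count (seq_avoids p') (permutations (iota 0 m))) ->
  count (shortest_prefix p t) (permutations (iota 0 t))
  = count (shortest_prefix p' t) (permutations (iota 0 t)).
Proof.
move=> avoid_eq; case: t => [|t]; first by rewrite /= !shortest_prefix0 !seq_contains_nil.
set L := permutations (iota 0 t.+1).
have split_avoids (r : pop k) : count (fun s => seq_avoids r (take t s)) L
    = count (shortest_prefix r t.+1) L + count (seq_avoids r) L.
  rewrite !count_sum_nat -big_split; apply: eq_big_seq => s.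
  rewrite mem_permutations => /perm_size; rewrite size_iota => size_s.
  rewrite /= shortest_prefixS (@take_oversize _ t.+1) ?size_s // /seq_avoids.
  case: (boolP (seq_contains r (take t s))) => [/seq_contains_take -> // | _].
  by case: (seq_contains r s).
have prefix_avoids (r : pop k) : count (fun s => seq_avoids r (take t s)) L
    = size (undup [seq sort leq (take t s) | s <- L])
      * (count (seq_avoids r) (permutations (iota 0 t))
         * count predT (permutations (iota 0 (size (iota 0 t.+1) - t)))).
  rewrite -count_permutations_take_drop ?iota_uniq ?size_iota //.
  - by apply: eq_count => s; rewrite andbT.
  - exact: order_invariant_avoids.
have := split_avoids p; have := split_avoids p'.
by rewrite !prefix_avoids (avoid_eq t) (avoid_eq t.+1) => -> /eqP; rewrite eqn_add2r => /eqP.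
Qed.

Lemma count_avoiders_sum k l (p : pop k) (q : pop l) n :
  count (seq_avoids (sum_rel p q)) (permutations (iota 0 n))
  = count (seq_avoids p) (permutations (iota 0 n))
    + \sum_(t < n.+1) count (fun s => shortest_prefix p t (take t s) && seq_avoids q (drop t s))
                            (permutations (iota 0 n)).
Proof.
under eq_bigr => t _ do rewrite count_sum_nat.
rewrite !count_sum_nat exchange_big -big_split; apply: eq_big_seq => s.
rewrite mem_permutations => /perm_size; rewrite size_iota => <-.
by rewrite seq_avoids_sumE; under eq_bigr => t _ do rewrite shortest_prefix_take.
Qed.

Theorem theorem1p4 (k l : nat) (p p' : pop k) (q q' : pop l) :
  wilf_equiv p p' -> wilf_equiv q q' ->
  wilf_equiv (pop_sum p q) (pop_sum p' q').
Proof.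
move=> /wilf_equiv_count avoid_p /wilf_equiv_count avoid_q n _.
rewrite !num_avoidersE !count_avoiders_sum avoid_p; congr (_ + _).
apply: eq_bigr => t _; have le_tn : t <= size (iota 0 n) by rewrite size_iota -ltnS.
have split_count (r : pop k) (u : pop l) :=
  count_permutations_take_drop (iota_uniq 0 n) le_tn
    (order_invariant_shortest_prefix r t) (order_invariant_avoids u).
by rewrite !split_count (count_shortest_prefix_eq t avoid_p) avoid_q.
Qed.
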